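(* Let $d\ge 1$ and let $\beta=(\beta_1,\ldots,\beta_{d+1}) \in \mathbb{R}^{d+1}$ satisfy $\beta_1 \ge \beta_2 \ge \cdots \ge \beta_{d+1} \ge 0$, $\beta_1+\cdots+\beta_{d+1}=1$, and, for every $t \in \{1,\dots,d\}$, the inequality \[ \mathrm{PS}(t):\quad \prod_{i=1}^t (\beta_i - \beta_{d+1}) \le \sum_{j=t+1}^{d+1} (\beta_j - \beta_{d+1}) + (d+1)\beta_{d+1}. \] Then: (a) $\beta_t > 0$ for every $t \in \{1,\dots,d+1\}$; (b) for every $t \in \{1,\dots,d\}$, at least one of the inequalities $\beta_t \ge \beta_{t+1}$ and $\mathrm{PS}(t)$ is strict; (c) if for some $\ell \in \{1,\dots,d\}$ the inequality $\mathrm{PS}(i)$ holds with equality for every $i \in \{1,\dots,\ell\}$, then $\beta_i = \frac{1}{s_i} + \beta_{d+1}$ for every $i \in \{1,\dots,\ell\}$.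
   Context: The Sylvester sequence is defined by $s_1 := 2$ and $s_i := 1 + s_1 s_2 \cdots s_{i-1}$ for $i \ge 2$. *)

From HB Require Import structures.
From mathcomp Require Import all_boot all_order all_algebra.
Set Implicit Arguments. Unset Strict Implicit. Unset Printing Implicit Defensive.
Import Order.TTheory GRing.Theory Num.Theory.

(* sylv_prod n = s_1 * ... * s_n  (empty product = 1). *)
Fixpoint sylv_prod (n : nat) : nat :=
  match n with 0 => 1 | n'.+1 => sylv_prod n' * (sylv_prod n' + 1) end.

(* Sylvester sequence, 1-indexed: s_1 = 2, s_i = 1 + s_1 ... s_(i-1). *)
Definition sylvester (i : nat) : nat := (sylv_prod i.-1).+1.

Lemma sylvester1 : sylvester 1 = 2. Proof. by []. Qed.

Lemma sylvester_rec (i : nat) : 2 <= i ->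
  sylvester i = 1 + \prod_(1 <= j < i) sylvester j.
Proof.
case: i => // i _; rewrite /sylvester /= add1n; congr S.
elim: i => [|i IH]; first by rewrite big_geq.
by rewrite big_nat_recr //= -IH /sylvester /= addn1.
Qed.

Local Open Scope ring_scope.

(* beta is indexed by 1..d+1 (values of beta outside this range are irrelevant). *)
Definition PS_lhs (R : realFieldType) (d : nat) (beta : nat -> R) (t : nat) : R :=
  \prod_(1 <= i < t.+1) (beta i - beta d.+1).

Definition PS_rhs (R : realFieldType) (d : nat) (beta : nat -> R) (t : nat) : R :=
  \sum_(t.+1 <= j < d.+2) (beta j - beta d.+1) + d.+1%:R * beta d.+1.

(* Shift by c := beta_(d+1): with x_i := beta_i - c, the normalisation turns PS(t) into
   P(t) + S(t) <= 1, where P and S are the prefix products and prefix sums of x, and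
   S(d+1) = 1 - (d+1) c.  Along a nonincreasing x, S stays below 1 (a positive x_t makes
   P(t) positive), whence c > 0.  A tie x_(t+1) = x_t > 0 makes P + S strictly increase
   from t to t+1, so PS(t) and PS(t+1) cannot both hold with PS(t) an equality.  Finally,
   P + S = 1 at consecutive indices gives x_(t+1) (1 + P(t)) = P(t), which is the
   recursion P(t+1) = 1 / (s_1 ... s_(t+1)) of the Sylvester sequence. *)
From HB Require Import structures.
From mathcomp Require Import all_boot all_order all_algebra.
From mathcomp Require Import ring lra zify.
Set Implicit Arguments.
Unset Strict Implicit.
Unset Printing Implicit Defensive.
Import Order.TTheory GRing.Theory Num.Theory.
Local Open Scope ring_scope.

Lemma sylv_prodS (n : nat) : sylv_prod n.+1 = (sylv_prod n * sylvester n.+1)%N.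
Proof. by rewrite /= addn1. Qed.

Lemma sylv_prod_gt0 (n : nat) : (0 < sylv_prod n)%N.
Proof. by elim: n => //= n IH; rewrite muln_gt0 IH addn1. Qed.

Section PrefixProdSum.
Variables (R : realFieldType) (x : nat -> R).

Definition prefix_prod (t : nat) : R := \prod_(1 <= i < t.+1) x i.
Definition prefix_sum (t : nat) : R := \sum_(1 <= i < t.+1) x i.
(* The paper's PS(t) is [ps (fun i => beta i - beta d.+1) t <= 1], see [PS_gap]. *)
Definition ps (t : nat) : R := prefix_prod t + prefix_sum t.

Lemma prefix_prod0 : prefix_prod 0 = 1.
Proof. by rewrite /prefix_prod big_geq. Qed.

Lemma prefix_sum0 : prefix_sum 0 = 0.
Proof. by rewrite /prefix_sum big_geq. Qed.

Lemma prefix_prodS (t : nat) : prefix_prod t.+1 = prefix_prod t * x t.+1.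
Proof. by rewrite /prefix_prod big_nat_recr. Qed.

Lemma prefix_sumS (t : nat) : prefix_sum t.+1 = prefix_sum t + x t.+1.
Proof. by rewrite /prefix_sum big_nat_recr. Qed.

Lemma prefix_prod_gt0 (t : nat) :
  (forall i, (1 <= i <= t)%N -> 0 < x i) -> 0 < prefix_prod t.
Proof.
move=> x_gt0; rewrite /prefix_prod big_nat_cond.
by apply: prodr_gt0 => i /andP[/andP[i_ge1 i_lt] _]; apply: x_gt0; lia.
Qed.

Lemma prefix_prod_ge0 (t : nat) :
  (forall i, (1 <= i <= t)%N -> 0 <= x i) -> 0 <= prefix_prod t.
Proof.
move=> x_ge0; rewrite /prefix_prod big_nat_cond.
by apply: prodr_ge0 => i /andP[/andP[i_ge1 i_lt] _]; apply: x_ge0; lia.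
Qed.

Lemma prefix_sum_ge0 (t : nat) :
  (forall i, (1 <= i <= t)%N -> 0 <= x i) -> 0 <= prefix_sum t.
Proof.
move=> x_ge0; rewrite /prefix_sum big_nat_cond.
by apply: sumr_ge0 => i /andP[/andP[i_ge1 i_lt] _]; apply: x_ge0; lia.
Qed.

Lemma prefix_prod_le1 (t : nat) :
  (forall i, (1 <= i <= t)%N -> 0 <= x i) -> ps t <= 1 -> prefix_prod t <= 1.
Proof. by move=> /prefix_sum_ge0; rewrite /ps; lra. Qed.

Lemma ps_eqS_prefix_prod (t : nat) :
  ps t.+1 = ps t -> x t.+1 * (1 + prefix_prod t) = prefix_prod t.
Proof. by rewrite /ps prefix_prodS prefix_sumS => ?; lra. Qed.

(* With p := P(u) and y the common value, P + S grows by y (p y + 1 - p) > 0. *)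
Lemma ps_lt_succ_tie (u : nat) :
  0 <= prefix_prod u <= 1 -> 0 < x u.+1 -> x u.+2 = x u.+1 -> ps u.+1 < ps u.+2.
Proof.
rewrite /ps !prefix_prodS !prefix_sumS => /andP[p_ge0 p_le1] y_gt0 ->.
set p := prefix_prod u in p_ge0 p_le1 *; set y := x u.+1 in y_gt0 *.
have factor_gt0 : 0 < p * y + (1 - p).
  have [p_lt1|p_ge1] := ltP p 1; first by have := mulr_ge0 p_ge0 (ltW y_gt0); lra.
  have -> : p = 1 by lra.
  lra.
by have := mulr_gt0 y_gt0 factor_gt0; lra.
Qed.

Lemma ps_eqS_sylvester (t : nat) : ps t.+1 = ps t ->
  prefix_prod t = (sylv_prod t)%:R^-1 -> x t.+1 = (sylvester t.+1)%:R^-1.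
Proof.
move=> /ps_eqS_prefix_prod + P_eq; rewrite P_eq.
have -> : (sylvester t.+1)%:R = (sylv_prod t)%:R + 1 :> R by rewrite natr1.
have : 0 < (sylv_prod t)%:R :> R by rewrite ltr0n sylv_prod_gt0.
move: (sylv_prod t)%:R => q q_gt0 step.
have den_gt0 : 0 < 1 + q^-1 by rewrite ltr_wpDr ?invr_ge0 ?ltW.
rewrite -[x t.+1](mulfK (lt0r_neq0 den_gt0)) step.
by field; rewrite !lt0r_neq0 // ltr_wpDl ?ltW.
Qed.

Section ConstantPS.
Variable l : nat.
Hypothesis ps_const : forall {i}, (i < l)%N -> ps i.+1 = ps i.

Lemma ps_const_prefix_prod (i : nat) :
  (i <= l)%N -> prefix_prod i = (sylv_prod i)%:R^-1.
Proof.
elim: i => [|i IH] i_le; first by rewrite prefix_prod0 invr1.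
have P_eq := IH (ltnW i_le).
rewrite prefix_prodS (ps_eqS_sylvester (ps_const i_le) P_eq) P_eq.
by rewrite sylv_prodS natrM invfM.
Qed.

Lemma ps_const_sylvester (i : nat) :
  (1 <= i <= l)%N -> x i = (sylvester i)%:R^-1.
Proof.
case: i => // i /andP[_ i_lt]; apply: ps_eqS_sylvester; first exact: ps_const.
exact/ps_const_prefix_prod/ltnW.
Qed.

End ConstantPS.

End PrefixProdSum.

Section NonincreasingPrefixes.
Variables (R : realFieldType) (x : nat -> R) (n : nat).
Hypothesis x_ge0 : forall i, (1 <= i <= n)%N -> 0 <= x i.
Hypothesis x_noninc : forall i j, (1 <= i <= j)%N -> (j <= n)%N -> x j <= x i.
Hypothesis ps_le1 : forall t, (t <= n)%N -> ps x t <= 1.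

Lemma prefix_sum_lt1 (t : nat) : (t <= n)%N -> prefix_sum x t < 1.
Proof.
elim: t => [|t IH] t_le; first by rewrite prefix_sum0 ltr01.
have [y_gt0|y_le0] := ltP 0 (x t.+1).
  have P_gt0 : 0 < prefix_prod x t.+1.
    by apply: prefix_prod_gt0 => i i_le; apply: lt_le_trans y_gt0 (x_noninc _ _).
  by have := ps_le1 t_le; rewrite /ps; lra.
by rewrite prefix_sumS; have := IH (ltnW t_le); lra.
Qed.

Lemma noninc_lt_or_ps_lt1 (t : nat) :
  (1 <= t < n)%N -> x t.+1 < x t \/ ps x t < 1.
Proof.
move=> t_range; have [|y_eq] := ltrP (x t.+1) (x t); first by left.
right; have {}y_eq : x t.+1 = x t by apply/eqP; rewrite eq_le x_noninc //; lia.
case: t t_range y_eq => // u u_range y_eq.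
have [y_gt0|y_le0] := ltP 0 (x u.+1).
  have x_ge0_upto i : (1 <= i <= u)%N -> 0 <= x i by move=> ?; apply: x_ge0; lia.
  have P_bounds : 0 <= prefix_prod x u <= 1.
    by rewrite prefix_prod_ge0 ?prefix_prod_le1 ?ps_le1 //; lia.
  by apply: lt_le_trans (ps_lt_succ_tie P_bounds y_gt0 y_eq) (ps_le1 _); lia.
have y0 : x u.+1 = 0 by apply/eqP; rewrite eq_le y_le0 x_ge0 //; lia.
by rewrite /ps prefix_prodS y0 mulr0 add0r prefix_sum_lt1 //; lia.
Qed.

End NonincreasingPrefixes.

Section ShiftedBeta.
Variables (R : realFieldType) (d : nat) (beta : nat -> R).
Hypothesis beta_noninc : forall i, (1 <= i <= d)%N -> beta i.+1 <= beta i.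
Hypothesis beta_sum1 : \sum_(1 <= i < d.+2) beta i = 1.
Hypothesis beta_PS : forall t, (1 <= t <= d)%N -> PS_lhs d beta t <= PS_rhs d beta t.

Let x (i : nat) : R := beta i - beta d.+1.

Lemma prefix_sum_shift_last : prefix_sum x d.+1 = 1 - d.+1%:R * beta d.+1.
Proof. by rewrite /prefix_sum sumrB beta_sum1 sumr_const_nat subn1 mulr_natl. Qed.

Lemma PS_gap (t : nat) :
  (t <= d.+1)%N -> PS_rhs d beta t - PS_lhs d beta t = 1 - ps x t.
Proof.
move=> t_le; have := prefix_sum_shift_last.
rewrite /ps /PS_rhs /PS_lhs /prefix_prod /prefix_sum /x.
by rewrite (big_cat_nat _ (n := t.+1)) //=; lra.
Qed.

Lemma shift_noninc (i j : nat) : (1 <= i <= j)%N -> (j <= d.+1)%N -> x j <= x i.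
Proof.
move=> /andP[i_ge1 i_le_j] j_le; rewrite lerD2r.
pose D := [pred k | 1 <= k <= d.+1]%N.
have D_interval : {in D &, forall i j k, i < k < j -> k \in D}%N.
  by move=> a b; rewrite !inE => ? ? c ?; rewrite inE; lia.
have D_step : {in D, forall k, k.+1 \in D -> beta k.+1 <= beta k}.
  by move=> k; rewrite !inE => ? ?; apply: beta_noninc; lia.
have ge_trans (b a c : R) : b <= a -> c <= b -> c <= a.
  by move=> ba cb; exact: le_trans cb ba.
apply: (homo_leq_in (r := fun a b => b <= a) lexx ge_trans D_interval D_step);
  rewrite ?inE //; lia.
Qed.

Lemma shift_ge0 (i : nat) : (1 <= i <= d.+1)%N -> 0 <= x i.
Proof.
by move=> i_range; rewrite -(subrr (beta d.+1)); apply: shift_noninc; lia.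
Qed.

Lemma ps_shift_le1 (t : nat) : (t <= d)%N -> ps x t <= 1.
Proof.
case: t => [|t] t_le; first by rewrite /ps prefix_prod0 prefix_sum0 addr0.
by have := PS_gap (leqW t_le); have := beta_PS (t := t.+1) t_le; lra.
Qed.

Lemma beta_last_gt0 : 0 < beta d.+1.
Proof.
have noninc_upto_d i j : (1 <= i <= j)%N -> (j <= d)%N -> x j <= x i.
  by move=> ? /leqW; apply: shift_noninc.
have := prefix_sum_lt1 noninc_upto_d ps_shift_le1 (leqnn d).
have -> : prefix_sum x d = 1 - d.+1%:R * beta d.+1.
  by rewrite -prefix_sum_shift_last prefix_sumS /x subrr addr0.
by rewrite -(pmulr_rgt0 _ (ltr0Sn R d)); lra.
Qed.

Lemma beta_gt0 (t : nat) : (1 <= t <= d.+1)%N -> 0 < beta t.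
Proof. by move/shift_ge0; have := beta_last_gt0; rewrite /x; lra. Qed.

Lemma beta_lt_or_PS_lt (t : nat) : (1 <= t <= d)%N ->
  beta t.+1 < beta t \/ PS_lhs d beta t < PS_rhs d beta t.
Proof.
move=> t_range.
have ps_le1 u : (u <= d.+1)%N -> ps x u <= 1.
  rewrite leq_eqVlt ltnS => /orP[/eqP-> | /ps_shift_le1 //].
  rewrite /ps prefix_prodS /x subrr mulr0 add0r prefix_sum_shift_last.
  by have := mulr_gt0 (ltr0Sn R d) beta_last_gt0; lra.
have t_lt : (1 <= t < d.+1)%N by rewrite ltnS.
case: (noninc_lt_or_ps_lt1 shift_ge0 shift_noninc ps_le1 t_lt) => [x_lt|ps_lt1].
  by left; rewrite -(ltrD2r (- beta d.+1)).
have t_le : (t <= d.+1)%N by lia.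
by right; have := PS_gap t_le; lra.
Qed.

Lemma beta_sylvester (l : nat) : (1 <= l <= d)%N ->
  (forall i, (1 <= i <= l)%N -> PS_lhs d beta i = PS_rhs d beta i) ->
  forall i, (1 <= i <= l)%N -> beta i = (sylvester i)%:R^-1 + beta d.+1.
Proof.
move=> l_range PS_eq i i_range.
have ps_eq1 j : (j <= l)%N -> ps x j = 1.
  case: j => [|j] j_le; first by rewrite /ps prefix_prod0 prefix_sum0 addr0.
  have j_le_d : (j.+1 <= d.+1)%N by lia.
  by have := PS_gap j_le_d; rewrite PS_eq // subrr; lra.
have ps_const j : (j < l)%N -> ps x j.+1 = ps x j.
  by move=> j_lt; rewrite !ps_eq1 // ltnW.
by rewrite -(ps_const_sylvester ps_const i_range) /x subrK.
Qed.

End ShiftedBeta.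

Theorem lemma2p1 (R : realFieldType) (d : nat) (beta : nat -> R) :
  (1 <= d)%N ->
  (forall i : nat, (1 <= i <= d)%N -> beta i.+1 <= beta i) ->
  0 <= beta d.+1 ->
  \sum_(1 <= i < d.+2) beta i = 1 ->
  (forall t : nat, (1 <= t <= d)%N -> PS_lhs d beta t <= PS_rhs d beta t) ->
  [/\ (forall t : nat, (1 <= t <= d.+1)%N -> 0 < beta t),
      (forall t : nat, (1 <= t <= d)%N ->
         beta t.+1 < beta t \/ PS_lhs d beta t < PS_rhs d beta t) &
      (forall l : nat, (1 <= l <= d)%N ->
         (forall i : nat, (1 <= i <= l)%N -> PS_lhs d beta i = PS_rhs d beta i) ->
         forall i : nat, (1 <= i <= l)%N ->
           beta i = ((sylvester i)%:R)^-1 + beta d.+1)].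
Proof.
(* Neither [1 <= d] nor [0 <= beta d.+1] is needed. *)
move=> _ beta_noninc _ beta_sum1 beta_PS.
split; [exact: beta_gt0 | exact: beta_lt_or_PS_lt | exact: beta_sylvester].
Qed.
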